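(* Let $G$ be a finite vertex-labeled graph, $r\ge1$, and $v,w$ vertices of $G$ such that: (i) there is a label-preserving graph isomorphism $\varphi$ from $\mathcal S(v;1,2r)$ onto $\mathcal S(w;1,2r)$ satisfying $\mathrm d(w,\varphi(x))=\mathrm d(v,x)$ for every vertex $x$ of $\mathcal S(v;1,2r)$; (ii) $\mathrm d(v,w)>2r$; (iii) the graph $G'$ obtained from $G$ by switching $\mathcal N_1(v)$ and $\mathcal N_1(w)$ is not isomorphic to $G$ (as a labeled graph). Then $G$ and $G'$ have the same multiset of rooted labeled $r$-neighborhoods; in particular $G$ is not identifiable from its $r$-neighborhoods.
   Context: $\mathrm d$ denotes graph distance in $G$. For $t>s>0$, the shell $\mathcal S(v;s,t)$ is the subgraph of $G$ formed by all edges both of whose endpoints have distance from $v$ between $s$ and $t$ inclusive (together with the endpoints of these edges, so it has no isolated vertices). ''Switching $\mathcal N_1(v)$ and $\mathcal N_1(w)$'' means: $G'$ has the same vertex set as $G$; $v$ and $w$ exchange labels; every neighbor of $v$ that is not a vertex of $\mathcal S(v;1,2r)$ is made adjacent to $w$ instead of $v$, and every neighbor of $w$ that is not a vertex of $\mathcal S(w;1,2r)$ is made adjacent to $v$ instead of $w$; all other edges and labels are unchanged. The $r$-neighborhood $\mathcal N_r(u)$ is the subgraph induced by vertices at distance at most $r$ from $u$, rooted at $u$, with labels, up to root- and label-preserving isomorphism. $G$ is identifiable from its $r$-neighborhoods if every labeled graph on the same number of vertices with the same multiset $\{\mathcal N_r(u)\}$ is isomorphic to $G$. *)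

From mathcomp Require Import all_boot.
Set Implicit Arguments. Unset Strict Implicit. Unset Printing Implicit Defensive.

Definition simple_graph {T : finType} (e : rel T) := symmetric e /\ irreflexive e.

(* ball e k x = set of vertices y with graph distance d(x,y) <= k. *)
Fixpoint ball {T : finType} (e : rel T) (k : nat) (x : T) : {set T} :=
  match k with
  | 0 => [set x]
  | k'.+1 => let B := ball e k' x in B :|: [set y | [exists z in B, e z y]]
  end.

Definition dist_le {T : finType} (e : rel T) (k : nat) (x y : T) : bool :=
  y \in ball e k x.

(* s <= d(v,z) <= t   (for s >= 1) *)
Definition in_range {T : finType} (e : rel T) (v : T) (s t : nat) (z : T) : bool :=
  dist_le e t v z && ~~ dist_le e s.-1 v z.

(* vertex set of the shell S(v;s,t): endpoints of edges both of whose
   endpoints are at distance in [s,t] from v. Its edges are exactly the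
   edges of G between such vertices. *)
Definition shell_verts {T : finType} (e : rel T) (v : T) (s t : nat) : {set T} :=
  [set x | in_range e v s t x && [exists y, e x y && in_range e v s t y]].

Definition shell_iso {T : finType} {L : Type} (e : rel T) (lab : T -> L)
    (v w : T) (s t : nat) (phi : T -> T) : Prop :=
  let Sv := shell_verts e v s t in
  let Sw := shell_verts e w s t in
  [/\ {in Sv, forall x, phi x \in Sw},
      {in Sv &, injective phi},
      (forall y, y \in Sw -> exists2 x, x \in Sv & phi x = y) &
      {in Sv &, forall x y, e x y = e (phi x) (phi y)}] /\
  {in Sv, forall x, lab (phi x) = lab x} /\
  {in Sv, forall x k, dist_le e k w (phi x) = dist_le e k v x}.

Definition sw_moved {T : finType} (e : rel T) (v : T) (r : nat) : {set T} :=
  [set u | e v u && (u \notin shell_verts e v 1 (2 * r))].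

Definition switch_rel {T : finType} (e : rel T) (v w : T) (r : nat) : rel T :=
  fun x y =>
    let Mv := sw_moved e v r in
    let Mw := sw_moved e w r in
    let removed := [|| (x == v) && (y \in Mv), (y == v) && (x \in Mv),
                       (x == w) && (y \in Mw) | (y == w) && (x \in Mw)] in
    let added := [|| (x == w) && (y \in Mv), (y == w) && (x \in Mv),
                     (x == v) && (y \in Mw) | (y == v) && (x \in Mw)] in
    (e x y && ~~ removed) || added.

Definition switch_lab {T : finType} {L : Type} (lab : T -> L) (v w : T) : T -> L :=
  fun x => if x == v then lab w else if x == w then lab v else lab x.

Definition labeled_iso {T1 T2 : finType} {L : Type}
    (e1 : rel T1) (l1 : T1 -> L) (e2 : rel T2) (l2 : T2 -> L) : Prop :=
  exists f : T1 -> T2, [/\ bijective f,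
    (forall x y, e1 x y = e2 (f x) (f y)) &
    (forall x, l2 (f x) = l1 x)].

Definition nbhd_iso {T1 T2 : finType} {L : Type} (r : nat)
    (e1 : rel T1) (l1 : T1 -> L) (u1 : T1)
    (e2 : rel T2) (l2 : T2 -> L) (u2 : T2) : Prop :=
  let B1 := ball e1 r u1 in
  let B2 := ball e2 r u2 in
  exists psi : T1 -> T2,
    [/\ psi u1 = u2,
        {in B1, forall x, psi x \in B2},
        {in B1 &, injective psi} &
        (forall y, y \in B2 -> exists2 x, x \in B1 & psi x = y)] /\
    {in B1 &, forall x y, e1 x y = e2 (psi x) (psi y)} /\
    {in B1, forall x, l2 (psi x) = l1 x}.

(* same multiset {N_r(u)} *)
Definition same_nbhds {T1 T2 : finType} {L : Type} (r : nat)
    (e1 : rel T1) (l1 : T1 -> L) (e2 : rel T2) (l2 : T2 -> L) : Prop :=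
  exists sigma : T1 -> T2, bijective sigma /\
    forall u, nbhd_iso r e1 l1 u e2 l2 (sigma u).

Definition identifiable {T : finType} {L : Type} (r : nat)
    (e : rel T) (lab : T -> L) : Prop :=
  forall (T' : finType) (e' : rel T') (l' : T' -> L),
    simple_graph e' -> #|T'| = #|T| ->
    same_nbhds r e lab e' l' -> labeled_iso e lab e' l'.

From mathcomp Require Import all_boot.
From mathcomp Require Import zify.
From Stdlib Require Import FunctionalExtensionality.
Set Implicit Arguments. Unset Strict Implicit. Unset Printing Implicit Defensive.

(* The shell isomorphism phi, extended by v |-> w and by the identity on the
   neighbours of v that are switched over to w, maps the 2r-ball of v in G onto the
   2r-ball of w in G' preserving edges and labels; so every u with d(v,u) <= r has
   the same r-neighbourhood in G as its image in G', and symmetrically around w.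
   Vertices at distance > r from both v and w do not see the switch at all.  As
   d(v,w) > 2r these three regions are disjoint, and the local maps glue to an
   involution of the vertex set matching the r-neighbourhoods of G and G'.  Since G'
   is a simple graph on the same vertices that is not isomorphic to G, G is not
   identifiable. *)

Section Distance.
Variables (T : finType) (e : rel T).

Lemma dist_le0 x y : dist_le e 0 x y = (y == x).
Proof. by rewrite /dist_le /= in_set1. Qed.

Lemma dist_leS k x y :
  dist_le e k.+1 x y = dist_le e k x y || [exists z in ball e k x, e z y].
Proof. by rewrite /dist_le /= in_setU in_set. Qed.

Lemma dist_le_refl k x : dist_le e k x x.
Proof. by elim: k => [|k IH]; rewrite ?dist_le0 // dist_leS IH. Qed.

Lemma dist_le_mono k k' x y : k <= k' -> dist_le e k x y -> dist_le e k' x y.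
Proof.
move/subnK <-; elim: (k' - k) => //= n IH H.
by rewrite addSn dist_leS IH.
Qed.

Lemma dist_le_step k x y z : dist_le e k x y -> e y z -> dist_le e k.+1 x z.
Proof.
by move=> Hxy Hyz; rewrite dist_leS; apply/orP; right; apply/existsP; exists y; apply/andP.
Qed.

Lemma dist_le_trans a b x y z :
  dist_le e a x y -> dist_le e b y z -> dist_le e (a + b) x z.
Proof.
elim: b z => [|b IH] z Hxy; first by rewrite dist_le0 addn0 => /eqP ->.
rewrite dist_leS => /orP[H|/existsP[z' /andP[H1 H2]]].
  by apply: dist_le_mono (IH _ Hxy H); lia.
by rewrite addnS; apply: dist_le_step (IH _ Hxy H1) H2.
Qed.

Lemma dist_le_last_step k x y :
  dist_le e k x y -> y = x \/ exists2 z, dist_le e k.-1 x z & e z y.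
Proof.
elim: k y => [|k IH] y; first by rewrite dist_le0 => /eqP; left.
rewrite dist_leS => /orP[/IH [->|[z Hz Hzy]] | /existsP[z /andP[H1 H2]]].
- by left.
- by right; exists z => //; apply: dist_le_mono Hz; lia.
- by right; exists z.
Qed.

Lemma dist_le1 x y : dist_le e 1 x y = (y == x) || e x y.
Proof.
rewrite dist_leS dist_le0; congr orb; apply/existsP/idP => [[z /andP[]]|H].
  by rewrite /= in_set1 => /eqP ->.
by exists x; rewrite /= in_set1 eqxx H.
Qed.

Lemma dist_le_adj k x y : 0 < k -> e x y -> dist_le e k x y.
Proof. by move=> Hk Hxy; apply: dist_le_mono Hk _; rewrite dist_le1 Hxy orbT. Qed.

Hypothesis esym : symmetric e.

Lemma dist_le_sym k x y : dist_le e k x y -> dist_le e k y x.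
Proof.
elim: k y => [|k IH] y; first by rewrite !dist_le0 eq_sym.
rewrite dist_leS => /orP[H | /existsP[z /andP[H1 H2]]].
  by apply: dist_le_mono (IH _ H).
have Hyz : dist_le e 1 y z by rewrite dist_le1 esym H2 orbT.
by have := dist_le_trans Hyz (IH _ H1); rewrite add1n.
Qed.

End Distance.

(* By induction on [k <= r], [psi] maps the k-ball of [u1] onto the k-ball of
   [psi u1]; the closure hypotheses keep both balls inside [D1] and [D2]. *)
Section Transport.
Variables (T1 T2 : finType) (L : Type) (e1 : rel T1) (e2 : rel T2)
  (l1 : T1 -> L) (l2 : T2 -> L) (r : nat) (u1 : T1) (psi : T1 -> T2)
  (D1 : {set T1}) (D2 : {set T2}).
Hypotheses (u1D : u1 \in D1) (psiD : {in D1, forall x, psi x \in D2})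
  (psi_inj : {in D1 &, injective psi})
  (psi_surj : forall y, y \in D2 -> exists2 x, x \in D1 & psi x = y)
  (psi_edge : {in D1 &, forall x y, e1 x y = e2 (psi x) (psi y)})
  (psi_lab : {in D1, forall x, l2 (psi x) = l1 x})
  (D1_closed : forall x y, dist_le e1 r.-1 u1 x -> e1 x y -> y \in D1)
  (D2_closed : forall x y, x \in D1 -> dist_le e1 r.-1 u1 x ->
                           e2 (psi x) y -> y \in D2).

Lemma transport_balls k : k <= r ->
  [/\ forall x, dist_le e1 k u1 x -> x \in D1,
      forall y, dist_le e2 k (psi u1) y -> y \in D2 &
      {in D1, forall x, dist_le e2 k (psi u1) (psi x) = dist_le e1 k u1 x}].
Proof.
elim: k => [_|k IH Hk].
  split => [x|y|x xD]; rewrite ?dist_le0.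
  - by move/eqP ->.
  - by move/eqP ->; apply: psiD.
  - exact: (inj_in_eq psi_inj xD u1D).
have [ball1D ball2D psi_dist] := IH (ltnW Hk).
have Hkr : k <= r.-1 by lia.
split => [x|y|x xD]; rewrite dist_leS.
- case/orP => [/ball1D //|/existsP[z /andP[Hz Hzx]]].
  exact: D1_closed (dist_le_mono Hkr Hz) Hzx.
- case/orP => [/ball2D //|/existsP[z /andP[Hz Hzy]]].
  have [x xD Ex] := psi_surj (ball2D _ Hz); rewrite -Ex in Hz Hzy.
  by apply: (D2_closed xD) Hzy; apply: dist_le_mono Hkr _; rewrite -psi_dist.
- rewrite dist_leS psi_dist //; congr (_ || _).
  apply/existsP/existsP => [[z /andP[Hz Hzx]]|[z /andP[Hz Hzx]]].
  + have [z0 z0D Ez0] := psi_surj (ball2D _ Hz).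
    exists z0; apply/andP; split; last by rewrite psi_edge // Ez0.
    by change (dist_le e1 k u1 z0); rewrite -psi_dist // Ez0.
  + exists (psi z); apply/andP; split; last by rewrite -psi_edge // ball1D.
    by change (dist_le e2 k (psi u1) (psi z)); rewrite psi_dist // ball1D.
Qed.

Lemma transport_nbhd_iso : nbhd_iso r e1 l1 u1 e2 l2 (psi u1).
Proof.
have [ball1D ball2D psi_dist] := transport_balls (leqnn r).
exists psi; split; [split|split] => //.
- by move=> x Hx; change (dist_le e2 r (psi u1) (psi x)); rewrite psi_dist ?ball1D.
- by move=> x y Hx Hy; apply: psi_inj; rewrite ?ball1D.
- move=> y Hy; have [x xD Ex] := psi_surj (ball2D _ Hy); exists x => //.
  by change (dist_le e1 r u1 x); rewrite -psi_dist // Ex.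
- by move=> x y Hx Hy; apply: psi_edge; rewrite ?ball1D.
- by move=> x Hx; apply: psi_lab; rewrite ?ball1D.
Qed.

End Transport.

Section ShellIso.
Variables (T : finType) (L : Type) (e : rel T) (lab : T -> L) (v w : T) (s t : nat).
Local Notation Sv := (shell_verts e v s t).
Local Notation Sw := (shell_verts e w s t).

Section Projections.
Variables (phi : T -> T).
Hypothesis Hphi : shell_iso e lab v w s t phi.

Lemma shell_iso_map : {in Sv, forall x, phi x \in Sw}.
Proof. by case: Hphi => -[]. Qed.
Lemma shell_iso_inj : {in Sv &, injective phi}.
Proof. by case: Hphi => -[]. Qed.
Lemma shell_iso_surj y : y \in Sw -> exists2 x, x \in Sv & phi x = y.
Proof. by case: Hphi => -[_ _ H _] _; apply: H. Qed.
Lemma shell_iso_edge : {in Sv &, forall x y, e x y = e (phi x) (phi y)}.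
Proof. by case: Hphi => -[]. Qed.
Lemma shell_iso_lab : {in Sv, forall x, lab (phi x) = lab x}.
Proof. by case: Hphi => _ []. Qed.
Lemma shell_iso_dist : {in Sv, forall x k, dist_le e k w (phi x) = dist_le e k v x}.
Proof. by case: Hphi => _ []. Qed.

End Projections.

Lemma shell_iso_inv phi : shell_iso e lab v w s t phi ->
  exists phi', shell_iso e lab w v s t phi' /\ {in Sv, cancel phi phi'}.
Proof.
move=> Hphi.
pose phi' y := if [pick x in Sv | phi x == y] is Some x then x else y.
have phi'P y : y \in Sw -> phi' y \in Sv /\ phi (phi' y) = y.
  move=> yS; rewrite /phi'; case: pickP => [x /andP[xS /eqP <-] // | none].
  by have [x xS Ex] := shell_iso_surj Hphi yS; move: (none x); rewrite xS Ex eqxx.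
have phiK : {in Sv, cancel phi phi'}.
  move=> x xS; have [H1 H2] := phi'P _ (shell_iso_map Hphi xS).
  exact: shell_iso_inj H1 xS H2.
exists phi'; split => //; split; [split|split].
- by move=> y /phi'P[].
- by move=> y1 y2 /phi'P[_ E1] /phi'P[_ E2] E; rewrite -E1 -E2 E.
- by move=> x xS; exists (phi x); [exact: shell_iso_map | exact: phiK].
- move=> y1 y2 /phi'P[x1S E1] /phi'P[x2S E2].
  by rewrite -{1}E1 -{1}E2 (shell_iso_edge Hphi x1S x2S).
- by move=> y /phi'P[xS E]; rewrite -{2}E (shell_iso_lab Hphi xS).
- by move=> y /phi'P[xS E] k; rewrite -{2}E (shell_iso_dist Hphi xS).
Qed.

End ShellIso.

Lemma switch_rel_sym (T : finType) (e : rel T) v w r :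
  switch_rel e w v r = switch_rel e v w r.
Proof.
apply: functional_extensionality => x; apply: functional_extensionality => y.
rewrite /switch_rel /=.
case: (x == v); case: (y == v); case: (x == w); case: (y == w);
case: (x \in sw_moved e v r); case: (y \in sw_moved e v r);
case: (x \in sw_moved e w r); case: (y \in sw_moved e w r); case: (e x y) => //.
Qed.

Section Switch.
Variables (T : finType) (e : rel T) (r : nat).
Hypotheses (Hsg : simple_graph e) (Hr : 0 < r).
Let esym : symmetric e := Hsg.1.
Let eirr : irreflexive e := Hsg.2.
Local Notation shell v := (shell_verts e v 1 (2 * r)).
Local Notation moved v := (sw_moved e v r).

Lemma shellE v x : (x \in shell v) =
  [&& dist_le e (2 * r) v x, x != v & [exists y, [&& e x y, dist_le e (2 * r) v y & y != v]]].
Proof.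
rewrite inE /in_range /= dist_le0 -andbA; do 2!congr andb.
by apply: eq_existsb => y; rewrite dist_le0.
Qed.

Lemma shell_dist v x : x \in shell v -> dist_le e (2 * r) v x.
Proof. by rewrite shellE => /andP[]. Qed.

Lemma shell_neq v x : x \in shell v -> x != v.
Proof. by rewrite shellE => /and3P[]. Qed.

Lemma shell_notin_moved v x : x \in shell v -> x \notin moved v.
Proof. by move=> xS; rewrite inE xS andbF. Qed.

Lemma moved_adj v x : x \in moved v -> e v x.
Proof. by rewrite inE => /andP[]. Qed.

Lemma moved_neq v x : x \in moved v -> x != v.
Proof. by move/moved_adj; apply: contraTneq => ->; rewrite eirr. Qed.

(* Any other neighbour [y] of [x] would make [xy] an edge of the shell. *)
Lemma moved_leaf v x y : x \in moved v -> e x y -> y = v.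
Proof.
move=> xM Exy; apply/eqP; apply: contraTT (xM) => yv.
have Evx := moved_adj xM.
rewrite inE Evx negbK shellE (moved_neq xM) (dist_le_adj _ Evx) //=; last by lia.
apply/existsP; exists y; rewrite Exy yv andbT /=.
by apply: dist_le_mono (dist_le_step (dist_le_adj (ltnSn 0) Evx) Exy); lia.
Qed.

Lemma ball2r_cases v u : dist_le e (2 * r) v u ->
  [\/ u = v, u \in moved v | u \in shell v].
Proof.
move=> Hu; have [->|uv] := eqVneq u v; first by constructor 1.
case Evu: (e v u).
  by case uS: (u \in shell v); [constructor 3 | constructor 2; rewrite inE Evu uS].
constructor 3; have [Euv|[z Hz Ezu]] := dist_le_last_step Hu; first by rewrite Euv eqxx in uv.
have zv : z != v by apply: contraFneq Evu => <-.
rewrite shellE Hu uv; apply/existsP; exists z; rewrite esym Ezu zv andbT /=.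
by apply: dist_le_mono Hz; lia.
Qed.

Lemma dist_le_adj_pred a x u : e a x -> dist_le e r.-1 u x -> dist_le e r a u.
Proof.
move=> Eax Hux; have Hxu := dist_le_sym esym Hux.
by apply: dist_le_mono (dist_le_trans (dist_le_adj (ltnSn 0) Eax) Hxu); lia.
Qed.

Section Switching.
Variables (v w : T).
Local Notation e' := (switch_rel e v w r).

Lemma switch_rel_off x y : x != v -> x != w -> y != v -> y != w -> e' x y = e x y.
Proof.
move=> xv xw yv yw.
by rewrite /switch_rel (negbTE xv) (negbTE xw) (negbTE yv) (negbTE yw) /= orbF andbT.
Qed.

Lemma switch_rel_out x y : x != v -> x != w -> x \notin moved v -> x \notin moved w ->
  e' x y = e x y.
Proof.
move=> xv xw xMv xMw.
by rewrite /switch_rel (negbTE xv) (negbTE xw) (negbTE xMv) (negbTE xMw) /= !andbF /= andbT orbF.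
Qed.

Lemma switch_lab_off (L : Type) (lab : T -> L) x :
  x != v -> x != w -> switch_lab lab v w x = lab x.
Proof. by move=> xv xw; rewrite /switch_lab (negbTE xv) (negbTE xw). Qed.

Lemma far_nbhd_iso (L : Type) (lab : T -> L) u :
  ~~ dist_le e r v u -> ~~ dist_le e r w u ->
  nbhd_iso r e lab u e' (switch_lab lab v w) u.
Proof.
move=> uv uw; pose D := [set x | (x != v) && (x != w)].
have not_adj x a : dist_le e r.-1 u x -> ~~ dist_le e r a u -> e a x = false.
  by move=> Hx Ha; apply: contraNF Ha => /dist_le_adj_pred; apply.
have closed x y : dist_le e r.-1 u x -> e x y -> y \in D.
  move=> Hx Exy; rewrite inE; apply/andP; split; apply: contraTneq Exy => ->;
    by rewrite esym not_adj.
have neq a : ~~ dist_le e r a u -> u != a.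
  by apply: contraNneq => ->; exact: dist_le_refl.
apply: (@transport_nbhd_iso _ _ _ e e' lab _ r u id D D) => //.
- by rewrite inE !neq.
- by move=> y yD; exists y.
- by move=> x y; rewrite !inE => /andP[xv xw] /andP[yv yw]; rewrite switch_rel_off.
- by move=> x; rewrite inE => /andP[xv xw]; rewrite switch_lab_off.
- move=> x y; rewrite inE => /andP[xv xw] Hx.
  have notM a : ~~ dist_le e r a u -> x \notin moved a.
    by move=> Ha; apply/negP => /moved_adj; rewrite not_adj.
  by rewrite switch_rel_out ?notM //; apply: closed.
Qed.

End Switching.

Definition nbhd_map (v w : T) (phi : T -> T) (x : T) : T :=
  if x == v then w else if x \in moved v then x else phi x.

Lemma nbhd_map_v v w phi : nbhd_map v w phi v = w.
Proof. by rewrite /nbhd_map eqxx. Qed.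

Lemma nbhd_map_moved v w phi x : x \in moved v -> nbhd_map v w phi x = x.
Proof. by move=> xM; rewrite /nbhd_map (negbTE (moved_neq xM)) xM. Qed.

Lemma nbhd_map_shell v w phi x : x \in shell v -> nbhd_map v w phi x = phi x.
Proof.
by move=> xS; rewrite /nbhd_map (negbTE (shell_neq xS)) (negbTE (shell_notin_moved xS)).
Qed.

Definition nbhd_perm (v w : T) (phi phi' : T -> T) (u : T) : T :=
  if dist_le e r v u then nbhd_map v w phi u
  else if dist_le e r w u then nbhd_map w v phi' u else u.

Section Far.
Variables (v w : T).
Hypothesis Hvw : ~~ dist_le e (2 * r) v w.
Local Notation e' := (switch_rel e v w r).

Lemma far_vw a b x : a + b <= 2 * r -> dist_le e a v x -> dist_le e b w x -> False.
Proof.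
move=> Hab Ha Hb; move/negP: Hvw; apply; apply: dist_le_mono Hab _.
exact: dist_le_trans Ha (dist_le_sym esym Hb).
Qed.

Lemma w_neq_v : w != v.
Proof. by apply: contraNneq Hvw => ->; exact: dist_le_refl. Qed.

Lemma w_notin_moved : w \notin moved v.
Proof.
apply/negP => /moved_adj /(dist_le_adj (ltnSn 0)) H.
by apply: (far_vw _ H (dist_le_refl e 0 w)); lia.
Qed.

Lemma v_notin_moved : v \notin moved w.
Proof.
apply/negP => /moved_adj /(dist_le_adj (ltnSn 0)) H.
by apply: (far_vw _ (dist_le_refl e 0 v) H); lia.
Qed.

Lemma moved_disjoint x : x \in moved v -> x \notin moved w.
Proof.
move=> /moved_adj /(dist_le_adj (ltnSn 0)) Hv; apply/negP.
by move=> /moved_adj /(dist_le_adj (ltnSn 0)) Hw; apply: (far_vw _ Hv Hw); lia.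
Qed.

Lemma moved_notin_shell x : x \in moved v -> x \notin shell w.
Proof.
move=> xM; apply/negP; rewrite shellE => /and3P[_ _ /existsP[y /and3P[Exy Hy _]]].
rewrite (moved_leaf xM Exy) in Hy.
by apply: (far_vw _ (dist_le_refl e 0 v) Hy); lia.
Qed.

Lemma v_notin_shell : v \notin shell w.
Proof. by apply/negP => /shell_dist; exact: far_vw (dist_le_refl e 0 v). Qed.

Lemma switch_rel_w y : e' w y = (e w y && (y \notin moved w)) || (y \in moved v).
Proof.
have wM : w \notin moved w by apply/negP => /moved_neq; rewrite eqxx.
rewrite /switch_rel (negbTE w_neq_v) (negbTE w_notin_moved) (negbTE wM) eqxx /=.
by rewrite !andbF !orbF.
Qed.

Lemma switch_rel_moved x y : x \in moved v -> e' x y = (y == w).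
Proof.
move=> xM; have xv := moved_neq xM.
have xw : x != w by apply: contraNneq w_notin_moved => <-.
rewrite /switch_rel (negbTE xv) (negbTE xw) xM (negbTE (moved_disjoint xM)) /=.
rewrite !andbF !andbT !orbF.
by case Exy: (e x y); rewrite //= (moved_leaf xM Exy) eqxx.
Qed.

Lemma switch_simple : simple_graph e'.
Proof.
split => [x y | x].
  rewrite /switch_rel /= esym.
  case: (x == v); case: (y == v); case: (x == w); case: (y == w);
  case: (x \in moved v); case: (y \in moved v);
  case: (x \in moved w); case: (y \in moved w); case: (e y x) => //.
rewrite /switch_rel /= eirr /=; apply/negP => /or4P[] /andP[/eqP -> H].
- by move: w_notin_moved; rewrite H.
- by move: w_notin_moved; rewrite H.
- by move: v_notin_moved; rewrite H.
- by move: v_notin_moved; rewrite H.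
Qed.

Lemma switch_lab_sym (L : Type) (lab : T -> L) : switch_lab lab w v = switch_lab lab v w.
Proof.
apply: functional_extensionality => x; rewrite /switch_lab.
by case: (eqVneq x w) => [->|//]; rewrite (negbTE w_neq_v).
Qed.

Lemma nbhd_perm_sym phi phi' u : nbhd_perm w v phi' phi u = nbhd_perm v w phi phi' u.
Proof.
rewrite /nbhd_perm; case Hv: (dist_le e r v u); case Hw: (dist_le e r w u) => //.
by exfalso; apply: (far_vw _ Hv Hw); lia.
Qed.

Section NearV.
Variables (L : Type) (lab : T -> L) (phi phi' : T -> T).
Hypotheses (Hphi : shell_iso e lab v w 1 (2 * r) phi)
  (Hphi' : shell_iso e lab w v 1 (2 * r) phi') (phiK : {in shell v, cancel phi phi'}).
Local Notation psi := (nbhd_map v w phi).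
(* The vertices of the 2r-balls of [v] in G and of [w] in G'. *)
Local Notation D1 := ([set v] :|: moved v :|: shell v).
Local Notation D2 := ([set w] :|: moved v :|: shell w).

Lemma phi'K : {in shell w, cancel phi' phi}.
Proof.
move=> y yS; have xS := shell_iso_map Hphi' yS.
by apply: (shell_iso_inj Hphi' (shell_iso_map Hphi xS) yS); rewrite phiK.
Qed.

Lemma phi_shell x : x \in shell v ->
  [/\ phi x \in shell w, phi x != w, phi x != v, phi x \notin moved v & phi x \notin moved w].
Proof.
move=> xS; have pS := shell_iso_map Hphi xS; split => //.
- exact: shell_neq pS.
- by apply: contraNneq v_notin_shell => <-.
- by apply: contraTN pS => /moved_notin_shell.
- exact: shell_notin_moved pS.
Qed.

Lemma D1P x : x \in D1 -> [\/ x = v, x \in moved v | x \in shell v].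
Proof.
by rewrite !in_setU in_set1 => /orP[/orP[/eqP|]|]; [constructor 1|constructor 2|constructor 3].
Qed.

Lemma ball2r_D1 x : dist_le e (2 * r) v x -> x \in D1.
Proof. by case/ball2r_cases => [->|xM|xS]; rewrite !in_setU in_set1 ?eqxx ?xM ?xS ?orbT. Qed.

Lemma ball2r_D2 y : dist_le e (2 * r) w y -> y \notin moved w -> y \in D2.
Proof.
case/ball2r_cases => [->|yM|yS] nM; last by rewrite !in_setU yS orbT.
  by rewrite !in_setU in_set1 eqxx.
by rewrite yM in nM.
Qed.

Lemma nbhd_map_bij : [/\ {in D1, forall x, psi x \in D2}, {in D1 &, injective psi} &
  forall y, y \in D2 -> exists2 x, x \in D1 & psi x = y].
Proof.
pose chi y := if y == w then v else if y \in moved v then y else phi' y.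
have chi_moved y : y \in moved v -> chi y = y.
  by move=> yM; rewrite /chi yM; case: eqP yM => // ->; rewrite (negbTE w_notin_moved).
have chi_shell y : y \in shell w -> chi y = phi' y.
  move=> yS; have yM : y \notin moved v by apply: contraTN yS => /moved_notin_shell.
  by rewrite /chi (negbTE (shell_neq yS)) (negbTE yM).
have psiK x : x \in D1 -> psi x \in D2 /\ chi (psi x) = x.
  case/D1P => [->|xM|xS].
  - by rewrite nbhd_map_v /chi eqxx !in_setU in_set1 eqxx.
  - by rewrite nbhd_map_moved // chi_moved // !in_setU xM orbT.
  - have [pS _ _ _ _] := phi_shell xS.
    by rewrite nbhd_map_shell // chi_shell // phiK // !in_setU pS orbT.
split.
- by move=> x /psiK[].
- by move=> x y /psiK[_ Ex] /psiK[_ Ey] E; rewrite -Ex -Ey E.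
move=> y; rewrite !in_setU in_set1 => /orP[/orP[/eqP->|yM]|yS].
- by exists v; rewrite ?nbhd_map_v // !in_setU in_set1 eqxx.
- by exists y; rewrite ?nbhd_map_moved // !in_setU yM orbT.
- have xS := shell_iso_map Hphi' yS.
  by exists (phi' y); rewrite ?nbhd_map_shell ?phi'K // !in_setU xS orbT.
Qed.

Lemma nbhd_map_eq_w y : y \in D1 -> (psi y == w) = (y == v).
Proof.
case/D1P => [->|yM|yS]; first by rewrite nbhd_map_v !eqxx.
  rewrite nbhd_map_moved // (negbTE (moved_neq yM)).
  by apply: contraNF w_notin_moved => /eqP <-.
have [_ pw _ _ _] := phi_shell yS.
by rewrite nbhd_map_shell // (negbTE pw) (negbTE (shell_neq yS)).
Qed.

Lemma nbhd_map_edge : {in D1 &, forall x y, e x y = e' (psi x) (psi y)}.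
Proof.
have row_moved x y : x \in moved v -> y \in D1 -> e x y = e' (psi x) (psi y).
  move=> xM yD; rewrite nbhd_map_moved // switch_rel_moved // nbhd_map_eq_w //.
  by case: eqP => [->|yv]; [rewrite esym moved_adj | apply: contra_notF yv => /(moved_leaf xM)].
have row_v y : y \in D1 -> e v y = e' (psi v) (psi y).
  rewrite nbhd_map_v; case/D1P => [->|yM|yS].
  - by rewrite nbhd_map_v eirr (switch_simple.2 w).
  - by rewrite nbhd_map_moved // switch_rel_w yM orbT moved_adj.
  - have [_ pw _ pMv pMw] := phi_shell yS.
    rewrite nbhd_map_shell // switch_rel_w (negbTE pMv) pMw orbF andbT.
    have := shell_iso_dist Hphi yS 1; rewrite !dist_le1 (negbTE pw) (negbTE (shell_neq yS)).
    by move=> /= ->.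
have sym x y : e x y = e' (psi x) (psi y) -> e y x = e' (psi y) (psi x).
  by rewrite esym (switch_simple.1 (psi x)).
move=> x y xD yD; case/D1P: (xD) => [->|xM|xS]; first exact: row_v.
  exact: row_moved.
case/D1P: (yD) => [->|yM|yS]; first exact/sym/row_v.
  exact/sym/row_moved.
have [_ pw pv pMv pMw] := phi_shell xS.
by rewrite !nbhd_map_shell // switch_rel_out // (shell_iso_edge Hphi).
Qed.

Lemma nbhd_map_lab : {in D1, forall x, switch_lab lab v w (psi x) = lab x}.
Proof.
move=> x /D1P[->|xM|xS].
- by rewrite nbhd_map_v /switch_lab (negbTE w_neq_v) eqxx.
- rewrite nbhd_map_moved // switch_lab_off ?(moved_neq xM) //.
  by apply: contraNneq w_notin_moved => <-.
- have [_ pw pv _ _] := phi_shell xS.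
  by rewrite nbhd_map_shell // switch_lab_off // (shell_iso_lab Hphi).
Qed.

Lemma nbhd_map_iso u : dist_le e r v u ->
  nbhd_iso r e lab u e' (switch_lab lab v w) (psi u).
Proof.
move=> Hu; have ball x : dist_le e r.-1 u x -> dist_le e (2 * r).-1 v x.
  by move=> Hx; apply: dist_le_mono (dist_le_trans Hu Hx); lia.
have step a x y : dist_le e (2 * r).-1 a x -> e x y -> dist_le e (2 * r) a y.
  by move=> Hx Exy; apply: dist_le_mono (dist_le_step Hx Exy); lia.
have [psiD psi_inj psi_surj] := nbhd_map_bij.
apply: transport_nbhd_iso psiD psi_inj psi_surj nbhd_map_edge nbhd_map_lab _ _.
- by apply: ball2r_D1; apply: dist_le_mono Hu; lia.
- by move=> x y /ball Hx Exy; apply/ball2r_D1/(step _ _ _ Hx Exy).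
move=> x y /D1P[->|xM|xS] /ball Hx.
- rewrite nbhd_map_v switch_rel_w => /orP[/andP[Ewy yM]|yM].
    by apply: ball2r_D2 yM; apply: dist_le_adj Ewy; lia.
  by rewrite !in_setU yM orbT.
- by rewrite nbhd_map_moved // switch_rel_moved // => /eqP->; rewrite !in_setU in_set1 eqxx.
- have [_ pw pv pMv pMw] := phi_shell xS.
  rewrite nbhd_map_shell // switch_rel_out // => Exy.
  apply: ball2r_D2; first by apply: step Exy; rewrite (shell_iso_dist Hphi).
  by apply: contraNN pw => yM; apply/eqP; apply: moved_leaf yM _; rewrite esym.
Qed.

Lemma nbhd_permK_near u : dist_le e r v u ->
  nbhd_perm v w phi phi' (nbhd_perm v w phi phi' u) = u.
Proof.
move=> Hu; rewrite {2}/nbhd_perm Hu -nbhd_perm_sym.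
have : dist_le e (2 * r) v u by apply: dist_le_mono Hu; lia.
case/ball2r_cases => [->|uM|uS].
- by rewrite nbhd_map_v /nbhd_perm dist_le_refl nbhd_map_v.
- by rewrite nbhd_map_moved // nbhd_perm_sym /nbhd_perm Hu nbhd_map_moved.
- have [pS _ _ _ _] := phi_shell uS.
  by rewrite nbhd_map_shell // /nbhd_perm (shell_iso_dist Hphi) // Hu nbhd_map_shell // phiK.
Qed.

End NearV.
End Far.

Lemma switch_same_nbhds (v w : T) (L : Type) (lab : T -> L) (phi phi' : T -> T) :
  ~~ dist_le e (2 * r) v w ->
  shell_iso e lab v w 1 (2 * r) phi -> shell_iso e lab w v 1 (2 * r) phi' ->
  {in shell v, cancel phi phi'} ->
  same_nbhds r e lab (switch_rel e v w r) (switch_lab lab v w).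
Proof.
move=> Hvw Hphi Hphi' phiK.
have Hwv : ~~ dist_le e (2 * r) w v by apply: contra Hvw; apply: dist_le_sym.
have phi'K := phi'K Hphi Hphi' phiK.
pose sigma := nbhd_perm v w phi phi'.
have sigma_far u : ~~ dist_le e r v u -> ~~ dist_le e r w u -> sigma u = u.
  by rewrite /sigma /nbhd_perm => /negbTE-> /negbTE->.
have sigmaK : cancel sigma sigma.
  move=> u; case Hv: (dist_le e r v u); first exact: (nbhd_permK_near Hvw Hphi phiK Hv).
  case Hw: (dist_le e r w u); last by rewrite !sigma_far ?Hv ?Hw.
  by rewrite /sigma -!(nbhd_perm_sym Hvw) (nbhd_permK_near Hwv Hphi' phi'K Hw).
exists sigma; split => [|u]; first exact: (Bijective sigmaK sigmaK).
case Hv: (dist_le e r v u).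
  by rewrite /sigma /nbhd_perm Hv; exact: (nbhd_map_iso Hvw Hphi Hphi' phiK Hv).
case Hw: (dist_le e r w u).
  rewrite /sigma -(nbhd_perm_sym Hvw) /nbhd_perm Hw.
  rewrite -switch_rel_sym -(switch_lab_sym Hvw).
  exact: (nbhd_map_iso Hwv Hphi' Hphi phi'K Hw).
by rewrite sigma_far ?Hv ?Hw //; apply: far_nbhd_iso; rewrite ?Hv ?Hw.
Qed.

End Switch.

Theorem lemma2p1 (T : finType) (L : Type) (e : rel T) (lab : T -> L)
    (r : nat) (v w : T) :
  simple_graph e -> 1 <= r ->
  (exists phi : T -> T, shell_iso e lab v w 1 (2 * r) phi) ->
  ~~ dist_le e (2 * r) v w ->
  ~ labeled_iso e lab (switch_rel e v w r) (switch_lab lab v w) ->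
  same_nbhds r e lab (switch_rel e v w r) (switch_lab lab v w) /\
  ~ identifiable r e lab.
Proof.
move=> Hsg Hr [phi Hphi] Hvw Hniso.
have [phi' [Hphi' phiK]] := shell_iso_inv Hphi.
have same := switch_same_nbhds Hsg Hr Hvw Hphi Hphi' phiK.
split => // Hid; apply/Hniso/Hid => //.
exact: switch_simple.
Qed.
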